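(* Let $r, K, m, p, q, s, \gamma_A, \gamma_T$ be positive real constants, let $T>0$, and define, for $t\ge 0$ and $y\in\mathbb{R}$, $$f(t,y)=ry\Big(1-\frac{y}{K}\Big)+my\big(1-e^{-\gamma_A t}\big)+py\,e^{-\gamma_A t}-qy\big(1-e^{-\gamma_T t}\big)-sy\,e^{-\gamma_T t}.$$ Consider the initial value problem $\frac{dy}{dt}=f(t,y)$, $y(0)=y_0$, with $y_0>0$. Then this problem has a unique solution on $[0,T]$; this solution remains positive. Moreover, for the solution on $[0,\infty)$, $$\limsup_{t\to\infty} y(t)\le \frac{K(r+m+p)}{r}\qquad\text{and}\qquad \liminf_{t\to\infty} y(t)\ge \frac{K(r-q-s)}{r}.$$
   Context: This is a model for the proportion $y=n$ of damaged cells under a constant dose of inorganic arsenic (damaging, rate constant $\gamma_A$) and black tea (mitigating, rate constant $\gamma_T$): $r$ is a growth rate, $K$ a normalized carrying capacity, and $m,p,q,s$ are positive constants. *)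

From Stdlib Require Import Reals Lra.
From Coquelicot Require Import Coquelicot.
Open Scope R_scope.

Definition f_model (r K m p q s gA gT : R) (t y : R) : R :=
  r * y * (1 - y / K) + m * y * (1 - exp (- gA * t)) + p * y * exp (- gA * t)
  - q * y * (1 - exp (- gT * t)) - s * y * exp (- gT * t).

(* y has derivative l at t relative to the set D (one-sided at endpoints of an
   interval): the difference quotient tends to l as t+h -> t within D. *)
Definition has_deriv_within (D : R -> Prop) (y : R -> R) (t l : R) : Prop :=
  filterlim (fun h => (y (t + h) - y t) / h)
    (within (fun h => h <> 0 /\ D (t + h)) (locally 0)) (locally l).

Definition is_solution_on (D : R -> Prop) (F : R -> R -> R) (y0 : R)
    (y : R -> R) : Prop :=
  y 0 = y0 /\ forall t, D t -> has_deriv_within D y t (F t (y t)).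

Definition interval_0T (T : R) : R -> Prop := fun t => 0 <= t <= T.
Definition halfline : R -> Prop := fun t => 0 <= t.

Definition sup_from (y : R -> R) (t0 : R) : Rbar :=
  Lub_Rbar (fun v => exists t, t0 <= t /\ v = y t).
Definition inf_from (y : R -> R) (t0 : R) : Rbar :=
  Glb_Rbar (fun v => exists t, t0 <= t /\ v = y t).
Definition limsup_infty (y : R -> R) : Rbar :=
  Rbar_glb (fun v => exists t0, v = sup_from y t0).
Definition liminf_infty (y : R -> R) : Rbar :=
  Rbar_lub (fun v => exists t0, v = inf_from y t0).

From Stdlib Require Import Reals Lra FunctionalExtensionality.
From Coquelicot Require Import Coquelicot.
Open Scope R_scope.

(* With [c = r / K] the model is the logistic equation [y' = y (a t - c y)], whose
   net growth rate [a] stays in [[r - q - s, r + m + p]] for [t >= 0].  The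
   substitution [u = 1 / y] linearises it to [u' = c - a u], solved explicitly by
   [u t = e^{-A t} (1 / y0 + c \int_0^t e^{A})] with [A t = \int_0^t a]; this [u] is
   positive, so [1 / u] is a global positive solution.  Any solution [z] on
   [[0, T]] is bounded below there, and [h = 1 - z u] satisfies [h' = - c z h],
   [h 0 = 0], so [h = 0] by a Gronwall argument.  Comparing [u' = c - a u] with
   [u' = c - L u] for the two bounds [L] of [a] shows that [u] is eventually
   almost at least [c / (r + m + p)] and at most [c / (r - q - s)], which gives
   the bounds on [limsup y] and [liminf y]. *)

Lemma is_derive_has_deriv_within (D : R -> Prop) (y : R -> R) (t l : R) :
  is_derive y t l -> has_deriv_within D y t l.
Proof.
  intros Hy P [e He]. apply is_derive_Reals in Hy.
  destruct (Hy e (cond_pos e)) as [d Hd].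
  exists d. intros h Hh [Hh0 _]. apply He, Hd; [exact Hh0|].
  rewrite <- (Rminus_0_r h). exact Hh.
Qed.

Lemma locally_interval (a b x : R) : a < x < b -> locally x (fun u => a <= u <= b).
Proof.
  intros Hx. assert (Hd : 0 < Rmin (x - a) (b - x)) by (apply Rmin_glb_lt; lra).
  exists (mkposreal _ Hd). intros u Hu. change (Rabs (u - x) < Rmin (x - a) (b - x)) in Hu.
  pose proof (Rmin_l (x - a) (b - x)). pose proof (Rmin_r (x - a) (b - x)).
  apply Rabs_def2 in Hu. lra.
Qed.

Lemma has_deriv_within_is_derive (D : R -> Prop) (y : R -> R) (t l : R) :
  locally t D -> has_deriv_within D y t l -> is_derive y t l.
Proof.
  intros [d0 HD] H. apply is_derive_Reals. intros eps Heps.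
  destruct (H _ (locally_ball l (mkposreal eps Heps))) as [d Hd].
  exists (mkposreal _ (Rmin_pos _ _ (cond_pos d) (cond_pos d0))). simpl.
  intros h Hh0 Hh. apply (Hd h).
  - change (Rabs (h - 0) < d). rewrite Rminus_0_r.
    apply (Rlt_le_trans _ _ _ Hh (Rmin_l _ _)).
  - split; [exact Hh0|]. apply HD.
    change (Rabs (t + h - t) < d0). replace (t + h - t) with h by ring.
    apply (Rlt_le_trans _ _ _ Hh (Rmin_r _ _)).
Qed.

Lemma has_deriv_within_subset (D E : R -> Prop) (y : R -> R) (t l : R) :
  (forall x, E x -> D x) -> has_deriv_within D y t l -> has_deriv_within E y t l.
Proof.
  intros HED H P HP. destruct (H P HP) as [d Hd].
  exists d. intros h Hh [Hh0 Eh]. apply Hd; auto.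
Qed.

Lemma has_deriv_within_continuous (D : R -> Prop) (y : R -> R) (t l : R) :
  has_deriv_within D y t l -> filterlim y (within D (locally t)) (locally (y t)).
Proof.
  intros H P [eps HP].
  destruct (H _ (locally_ball l (mkposreal 1 Rlt_0_1))) as [d Hd].
  assert (Hl : 0 < Rabs l + 1) by (pose proof (Rabs_pos l); lra).
  assert (Hd' : 0 < Rmin d (eps / (Rabs l + 1))).
  { apply Rmin_glb_lt; [apply cond_pos | apply Rdiv_lt_0_compat; [apply cond_pos | exact Hl]]. }
  exists (mkposreal _ Hd'). intros x Hx Dx. apply HP. simpl in x.
  change (Rabs (x - t) < Rmin d (eps / (Rabs l + 1))) in Hx.
  change (Rabs (y x - y t) < eps).
  destruct (Req_dec x t) as [-> | Hne].
  { rewrite Rminus_diag, Rabs_R0. apply cond_pos. }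
  set (h := x - t) in Hx.
  assert (Hq : Rabs ((y (t + h) - y t) / h - l) < 1).
  { apply (Hd h).
    - change (Rabs (h - 0) < d). rewrite Rminus_0_r. exact (Rlt_le_trans _ _ _ Hx (Rmin_l _ _)).
    - unfold h. split; [lra|]. replace (t + (x - t)) with x by ring. exact Dx. }
  replace (t + h) with x in Hq by (unfold h; ring).
  set (Q := (y x - y t) / h) in Hq.
  replace (y x - y t) with (h * Q) by (unfold Q, h; field; lra).
  assert (HQ : Rabs Q <= Rabs l + 1).
  { pose proof (Rabs_triang (Q - l) l). replace (Q - l + l) with Q in * by ring. lra. }
  assert (Hh : Rabs h * (Rabs l + 1) < eps).
  { apply (Rmult_lt_reg_r (/ (Rabs l + 1))); [apply Rinv_0_lt_compat; exact Hl|].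
    rewrite Rmult_assoc, Rinv_r by lra. rewrite Rmult_1_r.
    exact (Rlt_le_trans _ _ _ Hx (Rmin_r _ _)). }
  rewrite Rabs_mult. pose proof (Rabs_pos h). nra.
Qed.

Definition clamp (a b x : R) : R := Rmax a (Rmin b x).

Lemma clamp_in (a b x : R) : a <= b -> a <= clamp a b x <= b.
Proof. intros. unfold clamp, Rmax, Rmin. repeat destruct Rle_dec; lra. Qed.

Lemma clamp_id (a b x : R) : a <= x <= b -> clamp a b x = x.
Proof. intros. unfold clamp, Rmax, Rmin. repeat destruct Rle_dec; lra. Qed.

Lemma clamp_lipschitz (a b x x' : R) : Rabs (clamp a b x - clamp a b x') <= Rabs (x - x').
Proof.
  unfold clamp, Rmax, Rmin.
  repeat destruct Rle_dec; unfold Rabs; repeat destruct Rcase_abs; lra.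
Qed.

Lemma continuous_clamp (f : R -> R) (a b x : R) :
  a <= b -> continuous_on (fun u => a <= u <= b) f ->
  continuous (fun u => f (clamp a b u)) x.
Proof.
  intros Hab Hf. apply (filterlim_comp _ _ _ (clamp a b) f _
    (within (fun u : R => a <= u <= b) (locally (clamp a b x)))).
  - intros P [e HP]. exists e. intros x' Hx'. apply HP.
    + exact (Rle_lt_trans _ _ _ (clamp_lipschitz a b x' x) Hx').
    + apply clamp_in, Hab.
  - apply Hf, clamp_in, Hab.
Qed.

Lemma deriv_nonneg_le (f df : R -> R) (a b : R) :
  a <= b ->
  (forall x, a < x < b -> is_derive f x (df x)) ->
  (forall x, a <= x <= b -> continuous f x) ->
  (forall x, a <= x <= b -> 0 <= df x) ->
  f a <= f b.
Proof.
  intros Hab Hd Hc Hpos.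
  destruct (MVT_gen f a b df) as [x [Hx Heq]];
    rewrite ?Rmin_left, ?Rmax_right in * by exact Hab.
  - exact Hd.
  - intros x Hx. apply continuity_pt_filterlim, Hc, Hx.
  - pose proof (Hpos x Hx). nra.
Qed.

Lemma gronwall_zero (h g : R -> R) (a b L : R) :
  (forall x, a <= x <= b -> continuous h x) ->
  (forall x, a < x < b -> is_derive h x (g x * h x)) ->
  (forall x, a <= x <= b -> g x <= L) ->
  h a = 0 -> forall t, a <= t <= b -> h t = 0.
Proof.
  intros Hc Hd Hg Ha t Ht.
  (* [h^2 e^{-2Lx}] is nonincreasing, nonnegative, and vanishes at [a] *)
  set (w := fun x => - (h x ^ 2 * exp (- 2 * L * x))).
  assert (Hw : w a <= w t).
  { apply (deriv_nonneg_le w (fun x => 2 * (L - g x) * h x ^ 2 * exp (- 2 * L * x)));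
      [lra | | |].
    - intros x Hx. assert (Hhx := Hd x ltac:(lra)). unfold w. auto_derive.
      + eexists. exact Hhx.
      + replace (Derive (fun y => h y) x) with (g x * h x)
          by (symmetry; apply is_derive_unique; exact Hhx).
        ring.
    - intros x Hx. apply continuity_pt_filterlim. unfold w.
      apply (continuity_pt_opp (fun x => h x ^ 2 * exp (- 2 * L * x))).
      apply (continuity_pt_mult (fun x => h x ^ 2) (fun x => exp (- 2 * L * x))).
      + apply (continuity_pt_comp h (fun v => v ^ 2)).
        * apply continuity_pt_filterlim, Hc. lra.
        * apply derivable_continuous_pt; reg.
      + apply derivable_continuous_pt; reg.
    - intros x Hx. pose proof (Hg x ltac:(lra)). pose proof (exp_pos (- 2 * L * x)).
      apply Rmult_le_pos; [apply Rmult_le_pos; [lra | apply pow2_ge_0] | lra]. }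
  unfold w in Hw. rewrite Ha in Hw.
  pose proof (exp_pos (- 2 * L * t)). pose proof (pow2_ge_0 (h t)).
  assert (Hh2 : h t ^ 2 = 0) by nra.
  simpl in Hh2. nra.
Qed.

Lemma is_derive_RInt_0 (f : R -> R) (t : R) :
  (forall x, continuous f x) -> is_derive (fun u => RInt f 0 u) t (f t).
Proof.
  intros Hf. apply (is_derive_RInt f (fun u => RInt f 0 u) 0 t); [|apply Hf].
  apply filter_forall. intros u.
  apply (@RInt_correct R_CompleteNormedModule), (@ex_RInt_continuous R_CompleteNormedModule).
  intros; apply Hf.
Qed.

Lemma limsup_infty_le (y : R -> R) (l : R) :
  (forall eps, 0 < eps -> Rbar_locally p_infty (fun t => y t <= l + eps)) ->
  Rbar_le (limsup_infty y) l.
Proof.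
  intros H.
  assert (Heps : forall eps, 0 < eps -> Rbar_le (limsup_infty y) (l + eps)).
  { intros eps Heps. destruct (H eps Heps) as [t0 Ht0].
    apply Rbar_le_trans with (sup_from y (t0 + 1)).
    - apply (proj1 (proj2_sig (Rbar_ex_glb _))). exists (t0 + 1). reflexivity.
    - apply (proj2 (Lub_Rbar_correct _)). intros v [t [Ht ->]]. apply Ht0. lra. }
  destruct (limsup_infty y) as [v | |]; simpl in *.
  - destruct (Rle_or_lt v l) as [Hv | Hv]; [exact Hv|].
    specialize (Heps ((v - l) / 2) ltac:(lra)). lra.
  - exact (Heps 1 Rlt_0_1).
  - exact I.
Qed.

Lemma liminf_infty_ge (y : R -> R) (l : R) :
  (forall eps, 0 < eps -> Rbar_locally p_infty (fun t => l - eps <= y t)) ->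
  Rbar_le l (liminf_infty y).
Proof.
  intros H.
  assert (Heps : forall eps, 0 < eps -> Rbar_le (l - eps) (liminf_infty y)).
  { intros eps Heps. destruct (H eps Heps) as [t0 Ht0].
    apply Rbar_le_trans with (inf_from y (t0 + 1)).
    - apply (proj2 (Glb_Rbar_correct _)). intros v [t [Ht ->]]. apply Ht0. lra.
    - apply (proj1 (proj2_sig (Rbar_ex_lub _))). exists (t0 + 1). reflexivity. }
  destruct (liminf_infty y) as [v | |]; simpl in *.
  - destruct (Rle_or_lt l v) as [Hv | Hv]; [exact Hv|].
    specialize (Heps ((l - v) / 2) ltac:(lra)). lra.
  - exact I.
  - exact (Heps 1 Rlt_0_1).
Qed.

Lemma limsup_infty_le_lim (y g : R -> R) (l : R) :
  Rbar_locally p_infty (fun t => y t <= g t) -> is_lim g p_infty l ->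
  Rbar_le (limsup_infty y) l.
Proof.
  intros Hyg Hg. apply limsup_infty_le. intros eps Heps.
  assert (Hg_eps : Rbar_locally p_infty (fun t => Rabs (g t - l) < eps))
    by exact (Hg _ (locally_ball l (mkposreal eps Heps))).
  refine (filter_imp _ _ _ (filter_and _ _ Hyg Hg_eps)).
  intros t [H1 H2]. apply Rabs_def2 in H2. lra.
Qed.

Lemma liminf_infty_ge_lim (y g : R -> R) (l : R) :
  Rbar_locally p_infty (fun t => g t <= y t) -> is_lim g p_infty l ->
  Rbar_le l (liminf_infty y).
Proof.
  intros Hgy Hg. apply liminf_infty_ge. intros eps Heps.
  assert (Hg_eps : Rbar_locally p_infty (fun t => Rabs (g t - l) < eps))
    by exact (Hg _ (locally_ball l (mkposreal eps Heps))).
  refine (filter_imp _ _ _ (filter_and _ _ Hgy Hg_eps)).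
  intros t [H1 H2]. apply Rabs_def2 in H2. lra.
Qed.

Lemma is_lim_relaxation (l d L : R) :
  0 < L -> is_lim (fun t => l + d * exp (- L * t)) p_infty l.
Proof.
  intros HL.
  assert (Hexp : is_lim (fun t => exp (- L * t)) p_infty 0).
  { apply (is_lim_comp exp (fun t => - L * t) p_infty 0 m_infty).
    - exact is_lim_exp_m.
    - replace m_infty with (Rbar_mult (- L) p_infty).
      + apply (is_lim_scal_l (fun t => t) (- L) p_infty p_infty), is_lim_id.
      + simpl. destruct (Rle_dec 0 (- L)); [exfalso; lra | reflexivity].
    - apply filter_forall. intros; discriminate. }
  pose proof (is_lim_plus' _ _ _ _ _ (is_lim_const l p_infty) (is_lim_scal_l _ d _ _ Hexp))
    as Hsum.
  simpl in Hsum. rewrite Rmult_0_r, Rplus_0_r in Hsum. exact Hsum.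
Qed.

Section Logistic.

Variables (a : R -> R) (c y0 : R).
Hypothesis a_continuous : forall t, continuous a t.
Hypothesis c_pos : 0 < c.
Hypothesis y0_pos : 0 < y0.

Definition logistic (t y : R) : R := y * (a t - c * y).

Definition rate_integral (t : R) : R := RInt a 0 t.

Definition recip_solution (t : R) : R :=
  exp (- rate_integral t) * (/ y0 + c * RInt (fun x => exp (rate_integral x)) 0 t).

Definition logistic_solution (t : R) : R := / recip_solution t.

Lemma continuous_exp_rate_integral (x : R) : continuous (fun u => exp (rate_integral u)) x.
Proof.
  apply (@ex_derive_continuous R_AbsRing R_NormedModule).
  auto_derive. exists (a x). exact (is_derive_RInt_0 a x a_continuous).
Qed.

Lemma is_derive_recip_solution (t : R) :
  is_derive recip_solution t (c - a t * recip_solution t).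
Proof.
  pose proof (is_derive_RInt_0 a t a_continuous) as HA.
  unfold recip_solution. auto_derive.
  - split; [exists (a t); exact HA|]. split.
    + apply (@ex_RInt_continuous R_CompleteNormedModule).
      intros x _. apply continuous_exp_rate_integral.
    + split; [|exact I]. apply filter_forall. intros x.
      apply continuity_pt_filterlim, continuous_exp_rate_integral.
  - replace (Derive (fun x => rate_integral x) t) with (a t)
      by (symmetry; apply is_derive_unique; exact HA).
    rewrite exp_Ropp. field. split; [lra | apply Rgt_not_eq, exp_pos].
Qed.

Lemma recip_solution_0 : recip_solution 0 = / y0.
Proof.
  unfold recip_solution, rate_integral. rewrite !RInt_point.
  change (exp (- 0) * (/ y0 + c * 0) = / y0). rewrite Ropp_0, exp_0. ring.
Qed.

Lemma recip_solution_pos (t : R) : 0 <= t -> 0 < recip_solution t.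
Proof.
  intros Ht. apply Rmult_lt_0_compat; [apply exp_pos|].
  assert (0 <= RInt (fun x => exp (rate_integral x)) 0 t).
  { apply RInt_ge_0; [exact Ht| |intros; left; apply exp_pos].
    apply (@ex_RInt_continuous R_CompleteNormedModule).
    intros x _. apply continuous_exp_rate_integral. }
  pose proof (Rinv_0_lt_compat _ y0_pos). nra.
Qed.

Lemma logistic_solution_pos (t : R) : 0 <= t -> 0 < logistic_solution t.
Proof. intros Ht. apply Rinv_0_lt_compat, recip_solution_pos, Ht. Qed.

Lemma is_derive_logistic_solution (t : R) :
  0 <= t -> is_derive logistic_solution t (logistic t (logistic_solution t)).
Proof.
  intros Ht. pose proof (recip_solution_pos t Ht) as Hpos.
  pose proof (is_derive_inv _ _ _ (is_derive_recip_solution t) (Rgt_not_eq _ _ Hpos)) as H.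
  unfold logistic, logistic_solution.
  replace (/ recip_solution t * (a t - c * / recip_solution t))
    with (- (c - a t * recip_solution t) / recip_solution t ^ 2) by (field; lra).
  exact H.
Qed.

Lemma logistic_solution_solves (D : R -> Prop) :
  (forall t, D t -> 0 <= t) -> is_solution_on D logistic y0 logistic_solution.
Proof.
  intros HD. split.
  - unfold logistic_solution. rewrite recip_solution_0. apply Rinv_inv.
  - intros t Dt. apply is_derive_has_deriv_within, is_derive_logistic_solution, HD, Dt.
Qed.

Lemma logistic_solution_unique (T : R) (z : R -> R) :
  is_solution_on (interval_0T T) logistic y0 z ->
  forall t, 0 <= t <= T -> z t = logistic_solution t.
Proof.
  intros [Hz0 Hz] t Ht. assert (HT : 0 <= T) by lra.
  set (zc := fun x => z (clamp 0 T x)).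
  assert (Hzc : forall x, continuous zc x).
  { intros x. apply continuous_clamp; [exact HT|].
    intros u Hu. exact (has_deriv_within_continuous _ _ _ _ (Hz u Hu)). }
  destruct (continuity_ab_min zc 0 T HT (fun x _ => proj2 (continuity_pt_filterlim _ _) (Hzc x)))
    as [xm [Hxm _]].
  (* [1 - z u] solves the linear equation [h' = - c z h] with [h 0 = 0] *)
  set (h := fun x => 1 - zc x * recip_solution x).
  assert (Hh : h t = 0).
  { apply (gronwall_zero h (fun x => - c * zc x) 0 T (- c * zc xm)); [| | | | exact Ht].
    - intros x _. apply continuity_pt_filterlim. unfold h.
      apply (continuity_pt_minus (fun _ => 1) (fun x => zc x * recip_solution x)).
      + apply continuity_pt_const. intros ? ?. reflexivity.
      + apply (continuity_pt_mult zc recip_solution); apply continuity_pt_filterlim; [apply Hzc|].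
        apply (@ex_derive_continuous R_AbsRing R_NormedModule).
        eexists. apply is_derive_recip_solution.
    - intros x Hx.
      assert (Hzx : is_derive zc x (logistic x (zc x))).
      { apply (is_derive_ext_loc z).
        - apply (filter_imp _ _ (fun u Hu => eq_sym (f_equal z (clamp_id 0 T u Hu)))).
          apply locally_interval, Hx.
        - unfold zc. rewrite clamp_id by lra.
          apply (has_deriv_within_is_derive (interval_0T T)); [apply locally_interval, Hx|].
          apply Hz. unfold interval_0T. lra. }
      unfold h. auto_derive.
      + split; [eexists; exact Hzx|]. split; [eexists; apply is_derive_recip_solution | exact I].
      + replace (Derive (fun y => zc y) x) with (logistic x (zc x))
          by (symmetry; apply is_derive_unique; exact Hzx).
        replace (Derive (fun y => recip_solution y) x) with (c - a x * recip_solution x)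
          by (symmetry; apply is_derive_unique, is_derive_recip_solution).
        unfold logistic. ring.
    - intros x Hx. apply Rmult_le_compat_neg_l; [lra | apply Hxm, Hx].
    - unfold h, zc. rewrite clamp_id by lra. rewrite Hz0, recip_solution_0. field. lra. }
  unfold h, zc in Hh. rewrite clamp_id in Hh by exact Ht.
  pose proof (recip_solution_pos t (proj1 Ht)).
  unfold logistic_solution. apply (Rmult_eq_reg_r (recip_solution t)); [|lra].
  rewrite Rinv_l; lra.
Qed.

Lemma logistic_solution_unique_halfline (z : R -> R) :
  is_solution_on halfline logistic y0 z -> forall t, 0 <= t -> z t = logistic_solution t.
Proof.
  intros [Hz0 Hz] t Ht. apply (logistic_solution_unique t); [split; [exact Hz0|] | lra].
  intros u Hu. apply (has_deriv_within_subset halfline).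
  - intros x Hx. apply Hx.
  - apply Hz, Hu.
Qed.

Lemma is_derive_recip_solution_gap (L t : R) :
  L <> 0 ->
  is_derive (fun x => (recip_solution x - c / L) * exp (L * x)) t
    ((L - a t) * recip_solution t * exp (L * t)).
Proof.
  intros HL. auto_derive; [eexists; apply is_derive_recip_solution|].
  replace (Derive (fun y => recip_solution y) t) with (c - a t * recip_solution t)
    by (symmetry; apply is_derive_unique, is_derive_recip_solution).
  field. exact HL.
Qed.

Lemma continuous_recip_solution_gap (L t : R) :
  L <> 0 -> continuous (fun x => (recip_solution x - c / L) * exp (L * x)) t.
Proof.
  intros HL. apply (@ex_derive_continuous R_AbsRing R_NormedModule).
  eexists. apply is_derive_recip_solution_gap, HL.
Qed.

Lemma exp_mul_exp_opp (u : R) : exp u * exp (- u) = 1.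
Proof. rewrite <- exp_plus, Rplus_opp_r. apply exp_0. Qed.

(* [c / L + (/ y0 - c / L) * exp (- L * t)] solves [u' = c - L u], [u 0 = / y0]. *)
Lemma recip_solution_ge (L : R) :
  0 < L -> (forall t, 0 <= t -> a t <= L) ->
  forall t, 0 <= t -> c / L + (/ y0 - c / L) * exp (- L * t) <= recip_solution t.
Proof.
  intros HL Ha t Ht.
  set (G := fun x => (recip_solution x - c / L) * exp (L * x)).
  assert (HG : G 0 <= G t).
  { apply (deriv_nonneg_le G (fun x => (L - a x) * recip_solution x * exp (L * x))); [exact Ht | | |].
    - intros x _. apply is_derive_recip_solution_gap. lra.
    - intros x _. apply continuous_recip_solution_gap. lra.
    - intros x Hx. pose proof (Ha x (proj1 Hx)). pose proof (recip_solution_pos x (proj1 Hx)).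
      pose proof (exp_pos (L * x)). apply Rmult_le_pos; [apply Rmult_le_pos|]; lra. }
  unfold G in HG. rewrite recip_solution_0, Rmult_0_r, exp_0, Rmult_1_r in HG.
  apply (Rmult_le_compat_r (exp (- L * t))) in HG; [|left; apply exp_pos].
  rewrite Rmult_assoc, Ropp_mult_distr_l_reverse, exp_mul_exp_opp, Rmult_1_r in HG.
  rewrite <- Ropp_mult_distr_l_reverse in HG. lra.
Qed.

Lemma recip_solution_le (L : R) :
  0 < L -> (forall t, 0 <= t -> L <= a t) ->
  forall t, 0 <= t -> recip_solution t <= c / L + (/ y0 - c / L) * exp (- L * t).
Proof.
  intros HL Ha t Ht.
  set (G := fun x => - ((recip_solution x - c / L) * exp (L * x))).
  assert (HG : G 0 <= G t).
  { apply (deriv_nonneg_le G (fun x => - ((L - a x) * recip_solution x * exp (L * x))));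
      [exact Ht | | |].
    - intros x _. apply (is_derive_opp (fun x => (recip_solution x - c / L) * exp (L * x))).
      apply is_derive_recip_solution_gap. lra.
    - intros x _. apply (continuous_opp (fun x => (recip_solution x - c / L) * exp (L * x))).
      apply continuous_recip_solution_gap. lra.
    - intros x Hx. pose proof (Ha x (proj1 Hx)). pose proof (recip_solution_pos x (proj1 Hx)).
      pose proof (exp_pos (L * x)).
      replace (- ((L - a x) * recip_solution x * exp (L * x)))
        with ((a x - L) * recip_solution x * exp (L * x)) by ring.
      apply Rmult_le_pos; [apply Rmult_le_pos|]; lra. }
  unfold G in HG. rewrite recip_solution_0, Rmult_0_r, exp_0, Rmult_1_r in HG.
  apply Ropp_le_cancel in HG.
  apply (Rmult_le_compat_r (exp (- L * t))) in HG; [|left; apply exp_pos].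
  rewrite Rmult_assoc, Ropp_mult_distr_l_reverse, exp_mul_exp_opp, Rmult_1_r in HG.
  rewrite <- Ropp_mult_distr_l_reverse in HG. lra.
Qed.

Lemma limsup_logistic_le (L : R) :
  0 < L -> (forall t, 0 <= t -> a t <= L) ->
  forall z, is_solution_on halfline logistic y0 z -> Rbar_le (limsup_infty z) (L / c).
Proof.
  intros HL Ha z Hz.
  set (g := fun t => c / L + (/ y0 - c / L) * exp (- L * t)).
  assert (Hg : is_lim g p_infty (c / L)) by (apply is_lim_relaxation, HL).
  assert (HcL : 0 < c / L) by (apply Rdiv_lt_0_compat; assumption).
  apply (limsup_infty_le_lim z (fun t => / g t)).
  - assert (Hg_pos : Rbar_locally p_infty (fun t => 0 < g t)).
    { apply (Hg (fun v => 0 < v)). exists (mkposreal _ HcL). intros v Hv.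
      change (Rabs (v - c / L) < c / L) in Hv. apply Rabs_def2 in Hv. lra. }
    assert (Ht_pos : Rbar_locally p_infty (fun t : R => 0 <= t)) by (exists 0; intros; lra).
    refine (filter_imp _ _ _ (filter_and _ _ Hg_pos Ht_pos)). intros t [Hgt Ht].
    rewrite (logistic_solution_unique_halfline z Hz t Ht).
    apply Rinv_le_contravar; [exact Hgt | apply recip_solution_ge; assumption].
  - replace (L / c) with (/ (c / L)) by (field; lra).
    apply (is_lim_inv g p_infty (c / L) Hg). intros H. injection H. lra.
Qed.

Lemma liminf_logistic_ge (L : R) :
  (forall t, 0 <= t -> L <= a t) ->
  forall z, is_solution_on halfline logistic y0 z -> Rbar_le (L / c) (liminf_infty z).
Proof.
  intros Ha z Hz.
  assert (Ht_pos : Rbar_locally p_infty (fun t : R => 0 <= t)) by (exists 0; intros; lra).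
  destruct (Rle_or_lt L 0) as [HL | HL].
  - apply (liminf_infty_ge_lim z (fun _ => L / c)); [|apply is_lim_const].
    refine (filter_imp _ _ _ Ht_pos). intros t Ht.
    rewrite (logistic_solution_unique_halfline z Hz t Ht).
    pose proof (logistic_solution_pos t Ht).
    assert (L / c <= 0) by (apply Rmult_le_0_r; [lra | left; apply Rinv_0_lt_compat, c_pos]).
    lra.
  - set (g := fun t => c / L + (/ y0 - c / L) * exp (- L * t)).
    assert (Hg : is_lim g p_infty (c / L)) by (apply is_lim_relaxation, HL).
    apply (liminf_infty_ge_lim z (fun t => / g t)).
    + refine (filter_imp _ _ _ Ht_pos). intros t Ht.
      rewrite (logistic_solution_unique_halfline z Hz t Ht).
      apply Rinv_le_contravar; [apply recip_solution_pos, Ht | apply recip_solution_le; assumption].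
    + replace (L / c) with (/ (c / L)) by (field; lra).
      apply (is_lim_inv g p_infty (c / L) Hg). intros H. injection H.
      assert (0 < c / L) by (apply Rdiv_lt_0_compat; assumption). lra.
Qed.

End Logistic.

Definition net_rate (r m p q s gA gT t : R) : R :=
  r + m * (1 - exp (- gA * t)) + p * exp (- gA * t)
  - q * (1 - exp (- gT * t)) - s * exp (- gT * t).

Lemma f_model_logistic (r K m p q s gA gT : R) :
  K <> 0 -> f_model r K m p q s gA gT = logistic (net_rate r m p q s gA gT) (r / K).
Proof.
  intros HK. extensionality t. extensionality y.
  unfold f_model, logistic, net_rate. field. exact HK.
Qed.

Lemma continuous_net_rate (r m p q s gA gT t : R) : continuous (net_rate r m p q s gA gT) t.
Proof.
  apply (@ex_derive_continuous R_AbsRing R_NormedModule).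
  unfold net_rate. auto_derive. exact I.
Qed.

Lemma exp_le_1 (u : R) : u <= 0 -> exp u <= 1.
Proof.
  intros [Hu | ->]; [|rewrite exp_0; lra].
  rewrite <- exp_0. left. apply exp_increasing, Hu.
Qed.

Lemma net_rate_bounds (r m p q s gA gT t : R) :
  0 < m -> 0 < p -> 0 < q -> 0 < s -> 0 < gA -> 0 < gT -> 0 <= t ->
  r - q - s <= net_rate r m p q s gA gT t <= r + m + p.
Proof.
  intros Hm Hp Hq Hs HgA HgT Ht. unfold net_rate.
  assert (HA : exp (- gA * t) <= 1) by (apply exp_le_1; nra).
  assert (HT : exp (- gT * t) <= 1) by (apply exp_le_1; nra).
  pose proof (exp_pos (- gA * t)). pose proof (exp_pos (- gT * t)).
  split; nra.
Qed.

Theorem mainTheorem1 (r K m p q s gA gT T y0 : R)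
  (hr : 0 < r) (hK : 0 < K) (hm : 0 < m) (hp : 0 < p) (hq : 0 < q)
  (hs : 0 < s) (hgA : 0 < gA) (hgT : 0 < gT) (hT : 0 < T) (hy0 : 0 < y0) :
  let F := f_model r K m p q s gA gT in
  (* unique solution on [0,T], which is positive *)
  (exists y : R -> R,
     is_solution_on (interval_0T T) F y0 y
     /\ (forall t, 0 <= t <= T -> 0 < y t)
     /\ (forall z : R -> R, is_solution_on (interval_0T T) F y0 z ->
           forall t, 0 <= t <= T -> z t = y t))
  /\
  (* the solution on [0,oo) exists, and every such solution obeys the bounds *)
  (exists y : R -> R, is_solution_on halfline F y0 y)
  /\
  (forall y : R -> R, is_solution_on halfline F y0 y ->
     Rbar_le (limsup_infty y) (Finite (K * (r + m + p) / r))
     /\ Rbar_le (Finite (K * (r - q - s) / r)) (liminf_infty y)).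
Proof.
  intros F. unfold F. rewrite f_model_logistic by lra.
  set (a := net_rate r m p q s gA gT). set (c := r / K).
  assert (Ha : forall t, continuous a t) by apply continuous_net_rate.
  assert (Hc : 0 < c) by (apply Rdiv_lt_0_compat; assumption).
  assert (Ha_bounds : forall t, 0 <= t -> r - q - s <= a t <= r + m + p)
    by (intros; apply net_rate_bounds; assumption).
  split; [|split].
  - exists (logistic_solution a c y0). split; [|split].
    + apply (logistic_solution_solves a c y0 Ha Hc hy0). intros t Ht. apply Ht.
    + intros t Ht. apply (logistic_solution_pos a c y0 Ha Hc hy0), Ht.
    + apply (logistic_solution_unique a c y0 Ha Hc hy0 T).
  - exists (logistic_solution a c y0).
    apply (logistic_solution_solves a c y0 Ha Hc hy0). intros t Ht. exact Ht.
  - intros y Hy. split.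
    + replace (K * (r + m + p) / r) with ((r + m + p) / c) by (unfold c; field; lra).
      apply (limsup_logistic_le a c y0 Ha Hc hy0); [lra | apply Ha_bounds | exact Hy].
    + replace (K * (r - q - s) / r) with ((r - q - s) / c) by (unfold c; field; lra).
      apply (liminf_logistic_ge a c y0 Ha Hc hy0); [apply Ha_bounds | exact Hy].
Qed.
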